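(* Let $M$ be a left $R$-module which is semi-projective and $\pi$-projective, and let $S = \operatorname{End}_R(M)$ with Jacobson radical $\operatorname{Jac}(S)$. Then $S/\operatorname{Jac}(S)$ is von Neumann regular if and only if for each $f \in S$ the submodule $\operatorname{Im}(f)$ has a weak supplement in $M$.
   Context: Endomorphisms are written on the right of their arguments, so for $s,f\in S$ the product $sf$ means first $s$ then $f$, and $\operatorname{Hom}_R(M,N)$ is a left $S$-module for each submodule $N\subseteq M$ (viewed as a subset of $S$). $M$ is semi-projective if $Sf = \operatorname{Hom}_R(M, \operatorname{Im}(f))$ for every $f \in S$. $M$ is $\pi$-projective if for all submodules $N, L$ of $M$ with $M = N + L$ one has $S = \operatorname{Hom}_R(M,N) + \operatorname{Hom}_R(M,L)$. A submodule $N$ of $M$ is small in $M$ if $N + L \neq M$ for every proper submodule $L$ of $M$. A submodule $L$ of $M$ is a weak supplement of a submodule $N$ if $N + L = M$ and $N \cap L$ is small in $M$. *)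

From HB Require Import structures.
From mathcomp Require Import all_boot all_order all_algebra.
Set Implicit Arguments. Unset Strict Implicit. Unset Printing Implicit Defensive.
Import GRing.Theory.
Local Open Scope ring_scope.

(* Left R-modules are MathComp [lmodType R]; submodules are predicates
   [M -> Prop]; S = End_R(M) is the set of R-linear maps [M -> M].
   Endomorphisms act on the right: the product s f in S means "first s,
   then f", i.e. the function [f \o s]. *)

Section ModDefs.
Variables (R : pzRingType) (M : lmodType R).

Definition is_submodule (N : M -> Prop) : Prop :=
  [/\ N 0, (forall x y, N x -> N y -> N (x + y)) &
      (forall (r : R) x, N x -> N (r *: x))].

Definition is_end (f : M -> M) : Prop :=
  forall (r : R) (x y : M), f (r *: x + y) = r *: f x + f y.

Definition smul (s f : M -> M) : M -> M := fun x => f (s x).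

Definition Im (f : M -> M) : M -> Prop := fun y => exists x, f x = y.

(* Hom_R(M, N) viewed as a subset of S *)
Definition Hom_into (N : M -> Prop) (g : M -> M) : Prop :=
  is_end g /\ forall x, N (g x).

Definition sum_is_whole (N L : M -> Prop) : Prop :=
  forall m, exists n l, [/\ N n, L l & m = n + l].

Definition semi_projective : Prop :=
  forall f, is_end f ->
    forall g, Hom_into (Im f) g <-> exists2 s, is_end s & g = smul s f.

Definition pi_projective : Prop :=
  forall N L, is_submodule N -> is_submodule L -> sum_is_whole N L ->
    forall s, is_end s ->
      exists g h, [/\ Hom_into N g, Hom_into L h & s = g \+ h].

Definition small (N : M -> Prop) : Prop :=
  forall L, is_submodule L -> sum_is_whole N L -> forall m, L m.

Definition weak_supplement (N L : M -> Prop) : Prop :=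
  [/\ is_submodule L, sum_is_whole N L & small (fun x => N x /\ L x)].

Definition left_ideal (I : (M -> M) -> Prop) : Prop :=
  [/\ (forall a, I a -> is_end a), I (fun _ => 0),
      (forall a b, I a -> I b -> I (a \+ b)) &
      (forall s a, is_end s -> I a -> I (smul s a))].

Definition maximal_left_ideal (I : (M -> M) -> Prop) : Prop :=
  [/\ left_ideal I, (exists2 a, is_end a & ~ I a) &
      (forall J, left_ideal J -> (forall a, I a -> J a) ->
         (exists2 a, is_end a & ~ J a) -> forall a, J a -> I a)].

Definition Jac (a : M -> M) : Prop :=
  is_end a /\ forall I, maximal_left_ideal I -> I a.

(* S / Jac(S) is von Neumann regular: every coset a + Jac(S) has some
   b + Jac(S) with (a b a) + Jac(S) = a + Jac(S). *)
Definition quot_Jac_regular : Prop :=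
  forall a, is_end a -> exists2 b, is_end b &
    Jac (fun x => smul (smul a b) a x - a x).

End ModDefs.

From mathcomp Require Import all_boot all_order all_algebra.
From mathcomp Require Import boolp classical_sets.
Set Implicit Arguments. Unset Strict Implicit. Unset Printing Implicit Defensive.
Import GRing.Theory.
Local Open Scope ring_scope.
Local Open Scope classical_set_scope.

(* The endomorphisms in Jac(S) are exactly those with small image. If c is in
   Jac(S) and M = Im c + L, pi-projectivity and semi-projectivity give s in S
   with Im(1 - s c) inside L, and 1 - s c has a left inverse, so L = M. If
   Im j is small and j lies outside a maximal left ideal I, then I + S j = S,
   so 1 = i + s j; hence Im i = M, and semi-projectivity puts 1 in S i, inside I.
   Now if a b a - a lies in Jac(S), then Im(1 - b a) is a weak supplement of
   Im a, their intersection lying in the small module Im(a b a - a);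
   conversely, a weak supplement L of Im a yields, through pi-projectivity,
   an s with Im(a s a - a) inside the small module Im a /\ L. *)

Section Endomorphisms.
Variables (R : pzRingType) (M : lmodType R).
Implicit Types (f g s t a b : M -> M) (N L : set M) (I J K : set (M -> M)).

Lemma end0 f : is_end f -> f 0 = 0.
Proof.
move=> fE; have := fE 1 0 0; rewrite scaler0 add0r scale1r => e.
by rewrite -[LHS](addrK (f 0) (f 0)) -e subrr.
Qed.

Lemma endD f : is_end f -> forall x y, f (x + y) = f x + f y.
Proof. by move=> fE x y; have := fE 1 x y; rewrite !scale1r. Qed.

Lemma endZ f : is_end f -> forall r x, f (r *: x) = r *: f x.
Proof. by move=> fE r x; have := fE r x 0; rewrite (end0 fE) !addr0. Qed.

Lemma endN f : is_end f -> forall x, f (- x) = - f x.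
Proof. by move=> fE x; rewrite -scaleN1r (endZ fE) scaleN1r. Qed.

Lemma is_end_id : is_end (@id M).
Proof. by []. Qed.

Lemma is_end0 : is_end (fun _ : M => 0).
Proof. by move=> r x y; rewrite scaler0 addr0. Qed.

Lemma is_end_smul s f : is_end s -> is_end f -> is_end (smul s f).
Proof. by move=> sE fE r x y; rewrite /smul sE fE. Qed.

Lemma is_end_add f g : is_end f -> is_end g -> is_end (f \+ g).
Proof. by move=> fE gE r x y /=; rewrite fE gE scalerDr addrACA. Qed.

Lemma is_end_sub f g : is_end f -> is_end g -> is_end (fun x => f x - g x).
Proof. by move=> fE gE r x y; rewrite fE gE scalerBr opprD addrACA. Qed.

Lemma Im_submodule f : is_end f -> is_submodule (Im f).
Proof.
move=> fE; split.
- by exists 0; rewrite (end0 fE).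
- by move=> _ _ [x <-] [y <-]; exists (x + y); rewrite (endD fE).
- by move=> r _ [x <-]; exists (r *: x); rewrite (endZ fE).
Qed.

Lemma submoduleN N x : is_submodule N -> N x -> N (- x).
Proof. by case=> _ _ NZ Nx; rewrite -scaleN1r; exact: NZ. Qed.

Lemma small_sub N N' : N' `<=` N -> small N -> small N'.
Proof.
move=> N'N sN L Ls sNL; apply: sN Ls _ => m.
by have [n [l [N'n Ll ->]]] := sNL m; exists n, l; split; first exact: N'N.
Qed.

Definition principal_ideal f : set (M -> M) :=
  fun a => exists2 s, is_end s & a = smul s f.

Definition ideal_sum I J : set (M -> M) :=
  fun a => exists i j, [/\ I i, J j & a = i \+ j].

Lemma left_ideal_principal f : is_end f -> left_ideal (principal_ideal f).
Proof.
move=> fE; split.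
- by move=> _ [s sE ->]; exact: is_end_smul.
- exists (fun _ => 0); first exact: is_end0.
  by apply/funext => x; rewrite /smul (end0 fE).
- move=> _ _ [s sE ->] [t tE ->]; exists (s \+ t); first exact: is_end_add.
  by apply/funext => x; rewrite /smul (endD fE).
- by move=> t _ tE [s sE ->]; exists (smul t s) => //; exact: is_end_smul.
Qed.

Lemma left_ideal_sum I J : left_ideal I -> left_ideal J ->
  left_ideal (ideal_sum I J).
Proof.
move=> [Iend I0 ID IS] [Jend J0 JD JS]; split.
- by move=> _ [i [j [Ii Jj ->]]]; apply: is_end_add; [exact: Iend|exact: Jend].
- exists (fun _ => 0), (fun _ => 0); split => //.
  by apply/funext => x /=; rewrite addr0.
- move=> _ _ [i [j [Ii Jj ->]]] [i' [j' [Ii' Jj' ->]]].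
  exists (i \+ i'), (j \+ j'); split; [exact: ID|exact: JD|].
  by apply/funext => x /=; rewrite addrACA.
- move=> s _ sE [i [j [Ii Jj ->]]].
  by exists (smul s i), (smul s j); split; [exact: IS|exact: JS|].
Qed.

Lemma ideal_suml I J : left_ideal J -> I `<=` ideal_sum I J.
Proof.
case=> _ J0 _ _ i Ii; exists i, (fun _ => 0); split => //.
by apply/funext => x /=; rewrite addr0.
Qed.

Lemma ideal_sumr I J : left_ideal I -> J `<=` ideal_sum I J.
Proof.
case=> _ I0 _ _ j Jj; exists (fun _ => 0), j; split => //.
by apply/funext => x /=; rewrite add0r.
Qed.

Lemma left_ideal_full I : left_ideal I -> I id -> forall a, is_end a -> I a.
Proof. by case=> _ _ _ IS Iid a aE; exact: (IS a id aE Iid). Qed.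

Lemma left_ideal_chain_bigcup K (F : set (set (M -> M))) :
  left_ideal K -> (forall X, F X -> left_ideal (K `|` X)) ->
  total_on F subset -> left_ideal (K `|` \bigcup_(X in F) X).
Proof.
move=> KI FI Ftot.
pose U := K `|` \bigcup_(X in F) X.
have common a b : U a -> U b -> exists X,
    [/\ left_ideal (K `|` X), K `|` X `<=` U, (K `|` X) a & (K `|` X) b].
  have sub X : F X -> K `|` X `<=` U.
    by move=> FX c [Kc|Xc]; [left|right; exists X].
  move=> [Ka|[X FX Xa]] [Kb|[Y FY Yb]].
  - by exists set0; rewrite setU0; split => // c Kc; left.
  - by exists Y; split; [exact: FI|exact: sub|left|right].
  - by exists X; split; [exact: FI|exact: sub|right|left].
  - have [XY|YX] := Ftot X Y FX FY.
    + by exists Y; split; [exact: FI|exact: sub|right; exact: XY|right].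
    + by exists X; split; [exact: FI|exact: sub|right|right; exact: YX].
have [Kend K0 _ _] := KI; split.
- move=> a Ua; have [X [[Xend _ _ _] _ Xa _]] := common a a Ua Ua.
  exact: Xend.
- by left.
- move=> a b Ua Ub; have [X [[_ _ XD _] XU Xa Xb]] := common a b Ua Ub.
  exact/XU/XD.
- move=> s a sE Ua; have [X [[_ _ _ XS] XU Xa _]] := common a a Ua Ua.
  exact/XU/XS.
Qed.

Lemma left_ideal_sub_maximal K : left_ideal K -> ~ K id ->
  exists2 I, maximal_left_ideal I & K `<=` I.
Proof.
move=> KI nKid.
(* Zorn runs over the X with K `|` X a proper left ideal, so that the union of
   the empty chain is still admissible. *)
pose P X := left_ideal (K `|` X) /\ ~ (K `|` X) id.
have [|A [[AI nAid] Amax]] := @Zorn_bigcup _ P.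
  move=> F FP Ftot; split.
    by apply: left_ideal_chain_bigcup => // X /FP[].
  by case=> [//|[X /FP [_ nXid] Xid]]; apply: nXid; right.
exists (K `|` A); last exact: subsetUl.
split => //; first by exists id.
move=> J JI AJ [a aE nJa].
have KJ : K `|` J = J by apply/setUidPr => b Kb; apply: AJ; left.
have PJ : P J.
  by rewrite /P KJ; split => // Jid; exact/nJa/(left_ideal_full JI Jid).
have JA : J `<=` A.
  by apply: contrapT => nJA; apply: Amax PJ; split => // b Ab; apply: AJ; right.
by move=> b /JA Ab; right.
Qed.

Lemma Jac_left_invertible a s : Jac a -> is_end s ->
  exists2 t, is_end t & forall x, t x - a (s (t x)) = x.
Proof.
move=> [aE aJ] sE; pose h x := x - a (s x).
have hE : is_end h by apply: is_end_sub => //; exact: is_end_smul.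
apply: contrapT => ninv.
have nKid : ~ principal_ideal h id.
  case=> t tE e; apply: ninv; exists t => // x.
  by rewrite [RHS](congr1 (@^~ x) e).
have [I Imax KI] := left_ideal_sub_maximal (left_ideal_principal hE) nKid.
have [II [b bE nIb] _] := Imax; have [_ _ ID IS] := II.
have Iid : I id.
  have -> : id = h \+ smul s a by apply/funext => x; rewrite /h /smul /= subrK.
  by apply: ID; [apply: KI; exists id|exact: IS (aJ _ Imax)].
exact/nIb/(left_ideal_full II Iid).
Qed.

End Endomorphisms.

Arguments is_end_id {R M}.

Section Projective.
Variables (R : pzRingType) (M : lmodType R).
Hypotheses (sp : semi_projective M) (pp : pi_projective M).
Implicit Types (f s a b c j : M -> M) (L : set M).

Lemma semi_projective_surj_split f : is_end f -> Im f = setT ->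
  exists2 t, is_end t & id = smul t f.
Proof. by move=> fE fT; apply/(sp fE); split => // x; rewrite fT. Qed.

Lemma pi_projective_split a L : is_end a -> is_submodule L ->
  sum_is_whole (Im a) L -> exists2 s, is_end s & forall x, L (x - a (s x)).
Proof.
move=> aE Ls aL.
have [g [h [[gE gIm] [_ hL] e]]] := pp (Im_submodule aE) Ls aL is_end_id.
have [s sE gs] := (sp aE g).1 (conj gE gIm).
exists s => // x; suff <- : h x = x - a (s x) by [].
by rewrite {2}(congr1 (@^~ x) e) gs /= /smul addrC addKr.
Qed.

Lemma Jac_small_Im c : Jac c -> small (Im c).
Proof.
move=> cJ L Ls cL m.
have [s sE sL] := pi_projective_split cJ.1 Ls cL.
have [t tE tinv] := Jac_left_invertible cJ sE.
by rewrite -(tinv m); exact: sL.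
Qed.

Lemma small_Im_Jac j : is_end j -> small (Im j) -> Jac j.
Proof.
move=> jE jsmall; split => // I Imax; have [II [b bE nIb] Imaxl] := Imax.
pose J := ideal_sum I (principal_ideal j).
have JI : left_ideal J by apply: left_ideal_sum => //; exact: left_ideal_principal.
have Jj : J j by apply: ideal_sumr => //; exists id.
apply: contrapT => nIj.
have [i [_ [Ii [s sE ->]] Jid]] : J id.
  apply: contrapT => nJid; apply/nIj/(Imaxl J JI _ _ _ Jj).
    exact: ideal_suml (left_ideal_principal jE).
  by exists id.
have iE : is_end i by case: II => + _ _ _; apply.
have iT : Im i = setT.
  apply/seteqP; split => // m _; apply: (jsmall _ (Im_submodule iE)) => x.
  exists (j (s x)), (i x); split; [by exists (s x)|by exists x|].
  by rewrite addrC [LHS](congr1 (@^~ x) Jid).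
have [t tE tid] := semi_projective_surj_split iE iT.
have Iid : I id by rewrite tid; case: II => _ _ _; apply.
exact/nIb/(left_ideal_full II Iid).
Qed.

Lemma Jac_regular_defect_weak_supplement a b : is_end a -> is_end b ->
  Jac (fun x => a (b (a x)) - a x) ->
  weak_supplement (Im a) (Im (fun x => x - a (b x))).
Proof.
move=> aE bE defJ; split.
- by apply: Im_submodule; apply: is_end_sub => //; exact: is_end_smul.
- move=> m; exists (a (b m)), (m - a (b m)); split; [by exists (b m)|by exists m|].
  by rewrite addrC subrK.
- apply: small_sub (Jac_small_Im defJ) => _ [[y <-] [z e]].
  have abz : a (b z) = z - a y by rewrite -e opprB addrC subrK.
  exists (- (b z + y)).
  by rewrite !(endN aE, endD aE, endN bE) abz subrK abz opprB opprK subrK.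
Qed.

Lemma weak_supplement_Jac_regular_defect a L : is_end a ->
  weak_supplement (Im a) L ->
  exists2 s, is_end s & Jac (fun x => a (s (a x)) - a x).
Proof.
move=> aE [Ls aL aLsmall].
have [s sE sL] := pi_projective_split aE Ls aL.
exists s => //; apply: small_Im_Jac.
  by apply: is_end_sub => //; do 2 apply: is_end_smul => //.
apply: small_sub aLsmall => _ [x <-]; split.
  by exists (s (a x) - x); rewrite (endD aE) (endN aE).
by rewrite -opprB; apply: submoduleN.
Qed.

End Projective.

Theorem mainTheorem3 (R : pzRingType) (M : lmodType R) :
  semi_projective M -> pi_projective M ->
  (quot_Jac_regular M <->
   forall f : M -> M, is_end f -> exists L, weak_supplement (Im f) L).
Proof.
move=> sp pp; split=> [reg f fE | wsupp a aE].
- have [b bE defJ] := reg f fE.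
  exists (Im (fun x => x - f (b x))).
  exact: (Jac_regular_defect_weak_supplement sp pp fE bE defJ).
- have [L aL] := wsupp a aE.
  exact: (weak_supplement_Jac_regular_defect sp pp aE aL).
Qed.
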